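(* Let $A$ be a category with a variance $(E,M)$ and let $C$ be a category. For every functor $F\colon A\rightarrow C$ of variance $(E,M)$, the restriction $F|_E$ is a covariant functor $E\rightarrow C$, the restriction $F|_M$ is a contravariant functor $M\rightarrow C$, and $(F|_E,F|_M)$ is a compatible pair. Moreover, the assignment $F\mapsto (F|_E,F|_M)$ is a bijection from the functors $A\rightarrow C$ of variance $(E,M)$ onto the compatible pairs $(G\colon E\rightarrow C,\ H\colon M\rightarrow C)$.
   Context: A strict factorization system on a category $A$ is a pair $(E,M)$ of subcategories of $A$, both containing all objects of $A$, such that every morphism $f$ of $A$ factors uniquely as $f=me$ with $e$ in $E$ and $m$ in $M$. A variance on $A$ is a pair $(E,M)$ such that both $(E,M)$ and $(M,E)$ are strict factorization systems. For $f\colon x\rightarrow y$ in $A$ write $f=f^m f^e$ with $f^e\colon x\rightarrow f_t$ in $E$, $f^m\colon f_t\rightarrow y$ in $M$, and $f=f_e f_m$ with $f_m\colon x\rightarrow f_s$ in $M$, $f_e\colon f_s\rightarrow y$ in $E$. (For $f$ in $E$: $f_s=x$, $f_t=y$; for $f$ in $M$: $f_s=y$, $f_t=x$.) A functor $F\colon A\rightarrow C$ of variance $(E,M)$ consists of a function $F$ on objects and a function $F$ on morphisms such that: $F$ sends identities to identities; for every morphism $f$ of $A$, $F(f)$ is a morphism $F(f_s)\rightarrow F(f_t)$; and for all composable morphisms $x\xrightarrow{f}y\xrightarrow{g}z$ of $A$, $$F(gf)=F((g^ef^m)^e)\,F(f)\,F((g_mf_e)_m)\quad\text{and}\quad F(gf)=F((g^ef^m)^m)\,F(g)\,F((g_mf_e)_e).$$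 A compatible pair consists of a covariant functor $G\colon E\rightarrow C$ and a contravariant functor $H\colon M\rightarrow C$ which agree on objects and satisfy $G(f^e)H(f_m)=H(f^m)G(f_e)$ for every morphism $f$ of $A$. *)

(* Categories are presented in single-sorted form:
   a type of objects, a type of morphisms with domain/codomain maps,
   identities and a (total) composition operator whose laws are only
   required on composable pairs. *)
From Stdlib Require Import ClassicalEpsilon.

Record Cat := {
  Ob : Type;
  Mor : Type;
  dom : Mor -> Ob;
  cod : Mor -> Ob;
  idm : Ob -> Mor;
  comp : Mor -> Mor -> Mor;               (* comp g f = g o f *)
  dom_idm : forall x, dom (idm x) = x;
  cod_idm : forall x, cod (idm x) = x;
  dom_comp : forall f g, cod f = dom g -> dom (comp g f) = dom f;
  cod_comp : forall f g, cod f = dom g -> cod (comp g f) = cod g;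
  comp_idl : forall f, comp (idm (cod f)) f = f;
  comp_idr : forall f, comp f (idm (dom f)) = f;
  comp_assoc : forall f g h, cod f = dom g -> cod g = dom h ->
    comp h (comp g f) = comp (comp h g) f
}.

Arguments dom {c} _.
Arguments cod {c} _.
Arguments idm {c} _.
Arguments comp {c} _ _.

(* A subcategory containing all objects: a class of morphisms containing
   all identities and closed under composition. *)
Definition Subcat (A : Cat) (P : Mor A -> Prop) : Prop :=
  (forall x : Ob A, P (idm x)) /\
  (forall f g : Mor A, cod f = dom g -> P f -> P g -> P (comp g f)).

Definition SFS (A : Cat) (X Y : Mor A -> Prop) : Prop :=
  Subcat A X /\ Subcat A Y /\
  forall f : Mor A, exists! p : Mor A * Mor A,
    X (fst p) /\ Y (snd p) /\ cod (fst p) = dom (snd p) /\ comp (snd p) (fst p) = f.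

Definition Variance (A : Cat) (E M : Mor A -> Prop) : Prop :=
  SFS A E M /\ SFS A M E.

Definition fac {A : Cat} {X Y : Mor A -> Prop} (h : SFS A X Y) (f : Mor A)
  : Mor A * Mor A :=
  proj1_sig (constructive_indefinite_description _ (proj2 (proj2 h) f)).

Lemma fac_spec {A : Cat} {X Y : Mor A -> Prop} (h : SFS A X Y) (f : Mor A) :
  X (fst (fac h f)) /\ Y (snd (fac h f)) /\
  cod (fst (fac h f)) = dom (snd (fac h f)) /\
  comp (snd (fac h f)) (fst (fac h f)) = f.
Proof.
  unfold fac. exact (proj1 (proj2_sig (constructive_indefinite_description _ (proj2 (proj2 h) f)))).
Qed.

Section VarianceOps.
Context {A : Cat} {E M : Mor A -> Prop} (hV : Variance A E M).

(* f = f^m o f^e  with f^e in E, f^m in M *)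
Definition up_e (f : Mor A) : Mor A := fst (fac (proj1 hV) f).
Definition up_m (f : Mor A) : Mor A := snd (fac (proj1 hV) f).
(* f = f_e o f_m  with f_m in M, f_e in E *)
Definition lo_m (f : Mor A) : Mor A := fst (fac (proj2 hV) f).
Definition lo_e (f : Mor A) : Mor A := snd (fac (proj2 hV) f).
(* f_t = target of f^e, f_s = target of f_m *)
Definition obj_t (f : Mor A) : Ob A := cod (up_e f).
Definition obj_s (f : Mor A) : Ob A := cod (lo_m f).

Lemma up_e_E f : E (up_e f). Proof. exact (proj1 (fac_spec (proj1 hV) f)). Qed.
Lemma up_m_M f : M (up_m f). Proof. exact (proj1 (proj2 (fac_spec (proj1 hV) f))). Qed.
Lemma lo_m_M f : M (lo_m f). Proof. exact (proj1 (fac_spec (proj2 hV) f)). Qed.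
Lemma lo_e_E f : E (lo_e f). Proof. exact (proj1 (proj2 (fac_spec (proj2 hV) f))). Qed.

End VarianceOps.

Definition IsVarFunctor {A C : Cat} {E M : Mor A -> Prop} (hV : Variance A E M)
  (F0 : Ob A -> Ob C) (F1 : Mor A -> Mor C) : Prop :=
  (forall x : Ob A, F1 (idm x) = idm (F0 x)) /\
  (forall f : Mor A, dom (F1 f) = F0 (obj_s hV f) /\ cod (F1 f) = F0 (obj_t hV f)) /\
  (forall f g : Mor A, cod f = dom g ->
     F1 (comp g f) =
       comp (F1 (up_e hV (comp (up_e hV g) (up_m hV f))))
            (comp (F1 f) (F1 (lo_m hV (comp (lo_m hV g) (lo_e hV f))))) /\
     F1 (comp g f) =
       comp (F1 (up_m hV (comp (up_e hV g) (up_m hV f))))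
            (comp (F1 g) (F1 (lo_e hV (comp (lo_m hV g) (lo_e hV f)))))).

Definition IsCovFunctor {A C : Cat} (P : Mor A -> Prop)
  (G0 : Ob A -> Ob C) (G1 : {f : Mor A | P f} -> Mor C) : Prop :=
  (forall f : {f : Mor A | P f},
     dom (G1 f) = G0 (dom (proj1_sig f)) /\ cod (G1 f) = G0 (cod (proj1_sig f))) /\
  (forall x (hx : P (idm x)), G1 (exist _ (idm x) hx) = idm (G0 x)) /\
  (forall f g (hf : P f) (hg : P g) (hgf : P (comp g f)), cod f = dom g ->
     G1 (exist _ (comp g f) hgf) = comp (G1 (exist _ g hg)) (G1 (exist _ f hf))).

Definition IsContraFunctor {A C : Cat} (P : Mor A -> Prop)
  (H0 : Ob A -> Ob C) (H1 : {f : Mor A | P f} -> Mor C) : Prop :=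
  (forall f : {f : Mor A | P f},
     dom (H1 f) = H0 (cod (proj1_sig f)) /\ cod (H1 f) = H0 (dom (proj1_sig f))) /\
  (forall x (hx : P (idm x)), H1 (exist _ (idm x) hx) = idm (H0 x)) /\
  (forall f g (hf : P f) (hg : P g) (hgf : P (comp g f)), cod f = dom g ->
     H1 (exist _ (comp g f) hgf) = comp (H1 (exist _ f hf)) (H1 (exist _ g hg))).

Definition IsCompatiblePair {A C : Cat} {E M : Mor A -> Prop} (hV : Variance A E M)
  (O : Ob A -> Ob C) (G1 : {f : Mor A | E f} -> Mor C)
  (H1 : {f : Mor A | M f} -> Mor C) : Prop :=
  IsCovFunctor E O G1 /\ IsContraFunctor M O H1 /\
  forall f : Mor A,
    comp (G1 (exist _ (up_e hV f) (up_e_E hV f))) (H1 (exist _ (lo_m hV f) (lo_m_M hV f)))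
    = comp (H1 (exist _ (up_m hV f) (up_m_M hV f))) (G1 (exist _ (lo_e hV f) (lo_e_E hV f))).

Definition restr {A C : Cat} (P : Mor A -> Prop) (F1 : Mor A -> Mor C)
  : {f : Mor A | P f} -> Mor C :=
  fun p => F1 (proj1_sig p).

From Stdlib Require Import FunctionalExtensionality ProofIrrelevance.

(* Applying the two composition laws of a functor [F] of variance [(E,M)] to
   [f = f^m f^e] and to [f = f_e f_m] gives [F f = F(f^e) F(f_m) = F(f^m) F(f_e)],
   so [F] is determined by its restrictions, and these form a compatible pair.
   Conversely a compatible pair [(G,H)] glues to [F f := G(f^e) H(f_m)]. By
   uniqueness of factorizations, [(g f)^e = u^e f^e] and [(g f)^m = g^m u^m] with
   [u = g^e f^m], and dually [(g f)_m = v_m f_m], [(g f)_e = g_e v_e] with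
   [v = g_m f_e]; the composition laws of [F] then follow from the functoriality
   of [G] and [H], using compatibility to rewrite [F g] as [H(g^m) G(g_e)]. *)

Section CategoryFacts.
Variable C : Cat.

Lemma comp_idl_eq (f : Mor C) y : cod f = y -> comp (idm y) f = f.
Proof. intros <-. apply comp_idl. Qed.

Lemma comp_idr_eq (f : Mor C) x : dom f = x -> comp f (idm x) = f.
Proof. intros <-. apply comp_idr. Qed.

Lemma comp_assoc4 (a b c d : Mor C) :
  cod d = dom c -> cod c = dom b -> cod b = dom a ->
  comp (comp a b) (comp c d) = comp a (comp (comp b c) d).
Proof.
  intros Hdc Hcb Hba.
  rewrite <- (comp_assoc C (comp c d) b a) by (try rewrite cod_comp; auto).
  now rewrite (comp_assoc C d c b).
Qed.

End CategoryFacts.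

Lemma subcat_idm {A : Cat} {P : Mor A -> Prop} (hP : Subcat A P) x : P (idm x).
Proof. exact (proj1 hP x). Qed.

Lemma subcat_comp {A : Cat} {P : Mor A -> Prop} (hP : Subcat A P) f g :
  cod f = dom g -> P f -> P g -> P (comp g f).
Proof. exact (proj2 hP f g). Qed.

Lemma app_exist_eq {T R : Type} {P : T -> Prop} (phi : {x | P x} -> R)
  a b (ha : P a) (hb : P b) : a = b -> phi (exist _ a ha) = phi (exist _ b hb).
Proof. intros <-. now rewrite (proof_irrelevance _ ha hb). Qed.

Section FactorizationSystem.
Context {A : Cat} {X Y : Mor A -> Prop} (h : SFS A X Y).

Lemma fac_unique f a b :
  X a -> Y b -> cod a = dom b -> comp b a = f -> fac h f = (a, b).
Proof.
  intros Ha Hb Hab Hf.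
  destruct (proj2 (proj2 h) f) as [p [_ Hp]].
  rewrite <- (Hp (fac h f)) by apply (fac_spec h f).
  now apply Hp.
Qed.

Lemma fac_fst_X f : X (fst (fac h f)).
Proof. exact (proj1 (fac_spec h f)). Qed.

Lemma fac_snd_Y f : Y (snd (fac h f)).
Proof. exact (proj1 (proj2 (fac_spec h f))). Qed.

Lemma fac_mid f : cod (fst (fac h f)) = dom (snd (fac h f)).
Proof. exact (proj1 (proj2 (proj2 (fac_spec h f)))). Qed.

Lemma fac_factor f : comp (snd (fac h f)) (fst (fac h f)) = f.
Proof. exact (proj2 (proj2 (proj2 (fac_spec h f)))). Qed.

Lemma fac_dom f : dom (fst (fac h f)) = dom f.
Proof. rewrite <- (fac_factor f) at 2. now rewrite dom_comp by apply fac_mid. Qed.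

Lemma fac_cod f : cod (snd (fac h f)) = cod f.
Proof. rewrite <- (fac_factor f) at 2. now rewrite cod_comp by apply fac_mid. Qed.

Lemma fac_of_X {f} : X f -> fac h f = (f, idm (cod f)).
Proof.
  intros Hf. apply fac_unique; auto using comp_idl.
  - exact (subcat_idm (proj1 (proj2 h)) _).
  - now rewrite dom_idm.
Qed.

Lemma fac_of_Y {f} : Y f -> fac h f = (idm (dom f), f).
Proof.
  intros Hf. apply fac_unique; auto using comp_idr.
  - exact (subcat_idm (proj1 h) _).
  - now rewrite cod_idm.
Qed.

(* [g f = y_g (x_g y_f) x_f]; factoring the middle term [u = x_g y_f] as
   [y_u x_u] regroups this as [(y_g y_u) (x_u x_f)]. *)
Lemma fac_comp f g u : cod f = dom g ->
  u = comp (fst (fac h g)) (snd (fac h f)) ->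
  fac h (comp g f) =
    (comp (fst (fac h u)) (fst (fac h f)), comp (snd (fac h g)) (snd (fac h u))).
Proof.
  intros Hfg Hu.
  assert (Hmid : cod (snd (fac h f)) = dom (fst (fac h g)))
    by now rewrite fac_cod, fac_dom.
  assert (Hfu : cod (fst (fac h f)) = dom (fst (fac h u)))
    by (rewrite fac_dom, Hu, dom_comp by exact Hmid; apply fac_mid).
  assert (Hug : cod (snd (fac h u)) = dom (snd (fac h g)))
    by (rewrite fac_cod, Hu, cod_comp by exact Hmid; apply fac_mid).
  apply fac_unique.
  - apply (subcat_comp (proj1 h)); auto using fac_fst_X.
  - apply (subcat_comp (proj1 (proj2 h))); auto using fac_snd_Y.
  - rewrite cod_comp, dom_comp by assumption. apply fac_mid.
  - rewrite comp_assoc4 by (auto; apply fac_mid).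
    rewrite fac_factor, Hu, <- (comp_assoc A _ _ _ (fac_mid f) Hmid), fac_factor.
    rewrite (comp_assoc A f _ _) by (rewrite ?fac_dom; auto using fac_mid).
    now rewrite fac_factor.
Qed.

End FactorizationSystem.

Section Variance.
Context {A : Cat} {E M : Mor A -> Prop} (hV : Variance A E M).

Lemma up_mid f : cod (up_e hV f) = dom (up_m hV f).
Proof. apply fac_mid. Qed.

Lemma lo_mid f : cod (lo_m hV f) = dom (lo_e hV f).
Proof. apply fac_mid. Qed.

Lemma up_factor f : comp (up_m hV f) (up_e hV f) = f.
Proof. apply fac_factor. Qed.

Lemma lo_factor f : comp (lo_e hV f) (lo_m hV f) = f.
Proof. apply fac_factor. Qed.

Lemma up_e_dom f : dom (up_e hV f) = dom f.
Proof. apply fac_dom. Qed.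

Lemma up_m_cod f : cod (up_m hV f) = cod f.
Proof. apply fac_cod. Qed.

Lemma lo_m_dom f : dom (lo_m hV f) = dom f.
Proof. apply fac_dom. Qed.

Lemma lo_e_cod f : cod (lo_e hV f) = cod f.
Proof. apply fac_cod. Qed.

Lemma up_e_of_E {f} : E f -> up_e hV f = f.
Proof. intros hf. unfold up_e. now rewrite (fac_of_X _ hf). Qed.

Lemma up_m_of_E {f} : E f -> up_m hV f = idm (cod f).
Proof. intros hf. unfold up_m. now rewrite (fac_of_X _ hf). Qed.

Lemma up_e_of_M {f} : M f -> up_e hV f = idm (dom f).
Proof. intros hf. unfold up_e. now rewrite (fac_of_Y _ hf). Qed.

Lemma up_m_of_M {f} : M f -> up_m hV f = f.
Proof. intros hf. unfold up_m. now rewrite (fac_of_Y _ hf). Qed.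

Lemma lo_m_of_E {f} : E f -> lo_m hV f = idm (dom f).
Proof. intros hf. unfold lo_m. now rewrite (fac_of_Y _ hf). Qed.

Lemma lo_e_of_E {f} : E f -> lo_e hV f = f.
Proof. intros hf. unfold lo_e. now rewrite (fac_of_Y _ hf). Qed.

Lemma lo_m_of_M {f} : M f -> lo_m hV f = f.
Proof. intros hf. unfold lo_m. now rewrite (fac_of_X _ hf). Qed.

Lemma lo_e_of_M {f} : M f -> lo_e hV f = idm (cod f).
Proof. intros hf. unfold lo_e. now rewrite (fac_of_X _ hf). Qed.

Lemma E_idm x : E (idm x).
Proof. exact (subcat_idm (proj1 (proj1 hV)) x). Qed.

Lemma M_idm x : M (idm x).
Proof. exact (subcat_idm (proj1 (proj2 (proj1 hV))) x). Qed.

Lemma up_e_idm x : up_e hV (idm x) = idm x.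
Proof. exact (up_e_of_E (E_idm x)). Qed.

Lemma lo_e_idm x : lo_e hV (idm x) = idm x.
Proof. exact (lo_e_of_E (E_idm x)). Qed.

Lemma obj_s_of_E {f} : E f -> obj_s hV f = dom f.
Proof. intros hf. unfold obj_s. now rewrite (lo_m_of_E hf), cod_idm. Qed.

Lemma obj_t_of_E {f} : E f -> obj_t hV f = cod f.
Proof. intros hf. unfold obj_t. now rewrite (up_e_of_E hf). Qed.

Lemma obj_s_of_M {f} : M f -> obj_s hV f = cod f.
Proof. intros hf. unfold obj_s. now rewrite (lo_m_of_M hf). Qed.

Lemma obj_t_of_M {f} : M f -> obj_t hV f = dom f.
Proof. intros hf. unfold obj_t. now rewrite (up_e_of_M hf), cod_idm. Qed.

Lemma up_e_comp f g : cod f = dom g ->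
  up_e hV (comp g f) = comp (up_e hV (comp (up_e hV g) (up_m hV f))) (up_e hV f).
Proof. intros Hfg. unfold up_e at 1. now rewrite (fac_comp _ f g _ Hfg eq_refl). Qed.

Lemma up_m_comp f g : cod f = dom g ->
  up_m hV (comp g f) = comp (up_m hV g) (up_m hV (comp (up_e hV g) (up_m hV f))).
Proof. intros Hfg. unfold up_m at 1. now rewrite (fac_comp _ f g _ Hfg eq_refl). Qed.

Lemma lo_m_comp f g : cod f = dom g ->
  lo_m hV (comp g f) = comp (lo_m hV (comp (lo_m hV g) (lo_e hV f))) (lo_m hV f).
Proof. intros Hfg. unfold lo_m at 1. now rewrite (fac_comp _ f g _ Hfg eq_refl). Qed.

Lemma lo_e_comp f g : cod f = dom g ->
  lo_e hV (comp g f) = comp (lo_e hV g) (lo_e hV (comp (lo_m hV g) (lo_e hV f))).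
Proof. intros Hfg. unfold lo_e at 1. now rewrite (fac_comp _ f g _ Hfg eq_refl). Qed.

End Variance.

Section SubcategoryFunctors.
Context {A C : Cat} {P : Mor A -> Prop} {F0 : Ob A -> Ob C}
  {F1 : {f : Mor A | P f} -> Mor C}.

Section Covariant.
Hypothesis HF : IsCovFunctor P F0 F1.

Lemma cov_dom a (ha : P a) : dom (F1 (exist _ a ha)) = F0 (dom a).
Proof. exact (proj1 (proj1 HF (exist _ a ha))). Qed.

Lemma cov_cod a (ha : P a) : cod (F1 (exist _ a ha)) = F0 (cod a).
Proof. exact (proj2 (proj1 HF (exist _ a ha))). Qed.

Lemma cov_idm x (hx : P (idm x)) : F1 (exist _ (idm x) hx) = idm (F0 x).
Proof. exact (proj1 (proj2 HF) x hx). Qed.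

Lemma cov_comp_eq a f g (ha : P a) (hf : P f) (hg : P g) :
  cod f = dom g -> a = comp g f ->
  F1 (exist _ a ha) = comp (F1 (exist _ g hg)) (F1 (exist _ f hf)).
Proof. intros Hfg ->. exact (proj2 (proj2 HF) f g hf hg ha Hfg). Qed.

End Covariant.

Section Contravariant.
Hypothesis HF : IsContraFunctor P F0 F1.

Lemma contra_dom a (ha : P a) : dom (F1 (exist _ a ha)) = F0 (cod a).
Proof. exact (proj1 (proj1 HF (exist _ a ha))). Qed.

Lemma contra_cod a (ha : P a) : cod (F1 (exist _ a ha)) = F0 (dom a).
Proof. exact (proj2 (proj1 HF (exist _ a ha))). Qed.

Lemma contra_idm x (hx : P (idm x)) : F1 (exist _ (idm x) hx) = idm (F0 x).
Proof. exact (proj1 (proj2 HF) x hx). Qed.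

Lemma contra_comp_eq a f g (ha : P a) (hf : P f) (hg : P g) :
  cod f = dom g -> a = comp g f ->
  F1 (exist _ a ha) = comp (F1 (exist _ f hf)) (F1 (exist _ g hg)).
Proof. intros Hfg ->. exact (proj2 (proj2 HF) f g hf hg ha Hfg). Qed.

End Contravariant.
End SubcategoryFunctors.

Section RestrictionOfVarFunctor.
Context {A C : Cat} {E M : Mor A -> Prop} {hV : Variance A E M}
  {F0 : Ob A -> Ob C} {F1 : Mor A -> Mor C} (HF : IsVarFunctor hV F0 F1).

Lemma var_idm x : F1 (idm x) = idm (F0 x).
Proof. exact (proj1 HF x). Qed.

Lemma var_dom f : dom (F1 f) = F0 (obj_s hV f).
Proof. exact (proj1 (proj1 (proj2 HF) f)). Qed.

Lemma var_cod f : cod (F1 f) = F0 (obj_t hV f).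
Proof. exact (proj2 (proj1 (proj2 HF) f)). Qed.

Lemma var_dom_of_E {a} : E a -> dom (F1 a) = F0 (dom a).
Proof. intros ha. now rewrite var_dom, (obj_s_of_E hV ha). Qed.

Lemma var_cod_of_E {a} : E a -> cod (F1 a) = F0 (cod a).
Proof. intros ha. now rewrite var_cod, (obj_t_of_E hV ha). Qed.

Lemma var_dom_of_M {a} : M a -> dom (F1 a) = F0 (cod a).
Proof. intros ha. now rewrite var_dom, (obj_s_of_M hV ha). Qed.

Lemma var_cod_of_M {a} : M a -> cod (F1 a) = F0 (dom a).
Proof. intros ha. now rewrite var_cod, (obj_t_of_M hV ha). Qed.

Lemma var_comp_up f g : cod f = dom g ->
  F1 (comp g f) =
    comp (F1 (up_e hV (comp (up_e hV g) (up_m hV f))))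
         (comp (F1 f) (F1 (lo_m hV (comp (lo_m hV g) (lo_e hV f))))).
Proof. intros Hfg. exact (proj1 (proj2 (proj2 HF) f g Hfg)). Qed.

Lemma var_comp_lo f g : cod f = dom g ->
  F1 (comp g f) =
    comp (F1 (up_m hV (comp (up_e hV g) (up_m hV f))))
         (comp (F1 g) (F1 (lo_e hV (comp (lo_m hV g) (lo_e hV f))))).
Proof. intros Hfg. exact (proj2 (proj2 (proj2 HF) f g Hfg)). Qed.

Lemma var_comp_E f g : cod f = dom g -> E f -> E g ->
  F1 (comp g f) = comp (F1 g) (F1 f).
Proof.
  intros Hfg hf hg.
  rewrite (var_comp_up _ _ Hfg), (up_e_of_E hV hg), (up_m_of_E hV hf), comp_idr_eq by auto.
  rewrite (up_e_of_E hV hg), (lo_m_of_E hV hg), (lo_e_of_E hV hf), comp_idl_eq by auto.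
  rewrite (lo_m_of_E hV hf), var_idm.
  now rewrite comp_idr_eq by exact (var_dom_of_E hf).
Qed.

Lemma var_comp_M f g : cod f = dom g -> M f -> M g ->
  F1 (comp g f) = comp (F1 f) (F1 g).
Proof.
  intros Hfg hf hg.
  rewrite (var_comp_lo _ _ Hfg), (up_e_of_M hV hg), (up_m_of_M hV hf), comp_idl_eq by auto.
  rewrite (up_m_of_M hV hf), (lo_m_of_M hV hg), (lo_e_of_M hV hf), comp_idr_eq by auto.
  rewrite (lo_e_of_M hV hg), var_idm.
  now rewrite comp_idr_eq by exact (var_dom_of_M hg).
Qed.

Lemma var_comp_EM a b : cod a = dom b -> E a -> M b ->
  F1 (comp b a) = comp (F1 a) (F1 (lo_m hV (comp b a))).
Proof.
  intros Hab ha hb.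
  rewrite (var_comp_up _ _ Hab), (up_e_of_M hV hb), (up_m_of_E hV ha), <- Hab.
  rewrite comp_idl_eq, up_e_idm, var_idm, (lo_m_of_M hV hb), (lo_e_of_E hV ha)
    by apply cod_idm.
  apply comp_idl_eq. rewrite cod_comp, (var_cod_of_E ha); auto.
  rewrite (var_cod_of_M (lo_m_M hV _)), (var_dom_of_E ha), lo_m_dom.
  now rewrite dom_comp.
Qed.

Lemma var_comp_ME a b : cod a = dom b -> M a -> E b ->
  F1 (comp b a) = comp (F1 (up_m hV (comp b a))) (F1 b).
Proof.
  intros Hab ha hb.
  rewrite (var_comp_lo _ _ Hab), (up_e_of_E hV hb), (up_m_of_M hV ha).
  rewrite (lo_m_of_E hV hb), (lo_e_of_M hV ha), <- Hab.
  rewrite comp_idl_eq, lo_e_idm, var_idm by apply cod_idm.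
  now rewrite comp_idr_eq by now rewrite (var_dom_of_E hb), Hab.
Qed.

Lemma var_factor_up f : F1 f = comp (F1 (up_e hV f)) (F1 (lo_m hV f)).
Proof.
  rewrite <- (up_factor hV f) at 1.
  now rewrite (var_comp_EM _ _ (up_mid hV f) (up_e_E hV f) (up_m_M hV f)), up_factor.
Qed.

Lemma var_factor_lo f : F1 f = comp (F1 (up_m hV f)) (F1 (lo_e hV f)).
Proof.
  rewrite <- (lo_factor hV f) at 1.
  now rewrite (var_comp_ME _ _ (lo_mid hV f) (lo_m_M hV f) (lo_e_E hV f)), lo_factor.
Qed.

Lemma var_restr_cov : IsCovFunctor E F0 (restr E F1).
Proof.
  unfold restr. split; [|split].
  - intros [a ha]. exact (conj (var_dom_of_E ha) (var_cod_of_E ha)).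
  - intros x hx. apply var_idm.
  - intros f g hf hg hgf Hfg. now apply var_comp_E.
Qed.

Lemma var_restr_contra : IsContraFunctor M F0 (restr M F1).
Proof.
  unfold restr. split; [|split].
  - intros [a ha]. exact (conj (var_dom_of_M ha) (var_cod_of_M ha)).
  - intros x hx. apply var_idm.
  - intros f g hf hg hgf Hfg. now apply var_comp_M.
Qed.

Lemma var_restr_compatible : IsCompatiblePair hV F0 (restr E F1) (restr M F1).
Proof.
  split; [exact var_restr_cov | split; [exact var_restr_contra |]].
  intros f. unfold restr; simpl. now rewrite <- var_factor_up, <- var_factor_lo.
Qed.

End RestrictionOfVarFunctor.

Lemma var_functor_ext {A C : Cat} {E M : Mor A -> Prop} {hV : Variance A E M}
  {F0 F0' : Ob A -> Ob C} {F1 F1' : Mor A -> Mor C} :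
  IsVarFunctor hV F0 F1 -> IsVarFunctor hV F0' F1' ->
  (forall a, E a -> F1 a = F1' a) -> (forall a, M a -> F1 a = F1' a) -> F1 = F1'.
Proof.
  intros HF HF' HE HM. extensionality f.
  rewrite (var_factor_up HF f), (var_factor_up HF' f).
  now rewrite (HE _ (up_e_E hV f)), (HM _ (lo_m_M hV f)).
Qed.

Section VarFunctorOfCompatiblePair.
Context {A C : Cat} {E M : Mor A -> Prop} (hV : Variance A E M) {O : Ob A -> Ob C}
  (G1 : {f : Mor A | E f} -> Mor C) (H1 : {f : Mor A | M f} -> Mor C).

Definition var_of_pair (f : Mor A) : Mor C :=
  comp (G1 (exist _ (up_e hV f) (up_e_E hV f))) (H1 (exist _ (lo_m hV f) (lo_m_M hV f))).

Hypothesis HP : IsCompatiblePair hV O G1 H1.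
Let HG : IsCovFunctor E O G1 := proj1 HP.
Let HH : IsContraFunctor M O H1 := proj1 (proj2 HP).

Lemma var_of_pair_E {a} (ha : E a) : var_of_pair a = G1 (exist _ a ha).
Proof.
  unfold var_of_pair.
  rewrite (app_exist_eq H1 _ _ _ (M_idm hV (dom a)) (lo_m_of_E hV ha)), (contra_idm HH).
  rewrite comp_idr_eq by now rewrite (cov_dom HG), up_e_dom.
  exact (app_exist_eq G1 _ _ _ _ (up_e_of_E hV ha)).
Qed.

Lemma var_of_pair_M {a} (ha : M a) : var_of_pair a = H1 (exist _ a ha).
Proof.
  unfold var_of_pair.
  rewrite (app_exist_eq G1 _ _ _ (E_idm hV (dom a)) (up_e_of_M hV ha)), (cov_idm HG).
  rewrite comp_idl_eq by now rewrite (contra_cod HH), lo_m_dom.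
  exact (app_exist_eq H1 _ _ _ _ (lo_m_of_M hV ha)).
Qed.

Lemma var_of_pair_swap f : var_of_pair f =
  comp (H1 (exist _ (up_m hV f) (up_m_M hV f))) (G1 (exist _ (lo_e hV f) (lo_e_E hV f))).
Proof. exact (proj2 (proj2 HP) f). Qed.

Lemma var_of_pair_composable f :
  cod (H1 (exist _ (lo_m hV f) (lo_m_M hV f))) = dom (G1 (exist _ (up_e hV f) (up_e_E hV f))).
Proof. now rewrite (contra_cod HH), (cov_dom HG), lo_m_dom, up_e_dom. Qed.

Lemma var_of_pair_comp_up f g : cod f = dom g ->
  var_of_pair (comp g f) =
    comp (var_of_pair (up_e hV (comp (up_e hV g) (up_m hV f))))
         (comp (var_of_pair f) (var_of_pair (lo_m hV (comp (lo_m hV g) (lo_e hV f))))).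
Proof.
  intros Hfg.
  set (u := comp (up_e hV g) (up_m hV f)).
  set (v := comp (lo_m hV g) (lo_e hV f)).
  assert (Hfu : cod (up_e hV f) = dom (up_e hV u)).
  { rewrite up_e_dom. unfold u. rewrite dom_comp; [apply up_mid|].
    now rewrite up_m_cod, up_e_dom. }
  assert (Hfv : cod (lo_m hV f) = dom (lo_m hV v)).
  { rewrite lo_m_dom. unfold v. rewrite dom_comp; [apply lo_mid|].
    now rewrite lo_e_cod, lo_m_dom. }
  rewrite (var_of_pair_E (up_e_E hV u)), (var_of_pair_M (lo_m_M hV v)).
  unfold var_of_pair.
  rewrite (cov_comp_eq HG _ _ _ _ (up_e_E hV f) (up_e_E hV u) Hfu (up_e_comp hV f g Hfg)).
  rewrite (contra_comp_eq HH _ _ _ _ (lo_m_M hV f) (lo_m_M hV v) Hfv (lo_m_comp hV f g Hfg)).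
  apply comp_assoc4.
  - now rewrite (contra_cod HH), (contra_dom HH), Hfv.
  - apply var_of_pair_composable.
  - now rewrite (cov_cod HG), (cov_dom HG), Hfu.
Qed.

Lemma var_of_pair_comp_lo f g : cod f = dom g ->
  var_of_pair (comp g f) =
    comp (var_of_pair (up_m hV (comp (up_e hV g) (up_m hV f))))
         (comp (var_of_pair g) (var_of_pair (lo_e hV (comp (lo_m hV g) (lo_e hV f))))).
Proof.
  intros Hfg.
  set (u := comp (up_e hV g) (up_m hV f)).
  set (v := comp (lo_m hV g) (lo_e hV f)).
  assert (Hug : cod (up_m hV u) = dom (up_m hV g)).
  { rewrite up_m_cod. unfold u. rewrite cod_comp; [apply up_mid|].
    now rewrite up_m_cod, up_e_dom. }
  assert (Hvg : cod (lo_e hV v) = dom (lo_e hV g)).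
  { rewrite lo_e_cod. unfold v. rewrite cod_comp; [apply lo_mid|].
    now rewrite lo_e_cod, lo_m_dom. }
  rewrite (var_of_pair_M (up_m_M hV u)), (var_of_pair_E (lo_e_E hV v)), !var_of_pair_swap.
  rewrite (contra_comp_eq HH _ _ _ _ (up_m_M hV u) (up_m_M hV g) Hug (up_m_comp hV f g Hfg)).
  rewrite (cov_comp_eq HG _ _ _ _ (lo_e_E hV v) (lo_e_E hV g) Hvg (lo_e_comp hV f g Hfg)).
  apply comp_assoc4.
  - now rewrite (cov_cod HG), (cov_dom HG), Hvg.
  - now rewrite (cov_cod HG), (contra_dom HH), lo_e_cod, up_m_cod.
  - now rewrite (contra_cod HH), (contra_dom HH), Hug.
Qed.

Lemma var_of_pair_is_var : IsVarFunctor hV O var_of_pair.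
Proof.
  split; [|split].
  - intros x. now rewrite (var_of_pair_E (E_idm hV x)), (cov_idm HG).
  - intros f. unfold var_of_pair, obj_s, obj_t.
    rewrite dom_comp, cod_comp by apply var_of_pair_composable.
    now rewrite (contra_dom HH), (cov_cod HG).
  - intros f g Hfg.
    exact (conj (var_of_pair_comp_up f g Hfg) (var_of_pair_comp_lo f g Hfg)).
Qed.

Lemma restr_var_of_pair_E : restr E var_of_pair = G1.
Proof. extensionality a. destruct a as [a ha]. exact (var_of_pair_E ha). Qed.

Lemma restr_var_of_pair_M : restr M var_of_pair = H1.
Proof. extensionality a. destruct a as [a ha]. exact (var_of_pair_M ha). Qed.

End VarFunctorOfCompatiblePair.

Theorem mainTheorem2 (A C : Cat) (E M : Mor A -> Prop) (hV : Variance A E M) :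
  (* F |-> (F|_E, F|_M) lands in compatible pairs *)
  (forall (F0 : Ob A -> Ob C) (F1 : Mor A -> Mor C),
     IsVarFunctor hV F0 F1 ->
     IsCovFunctor E F0 (restr E F1) /\
     IsContraFunctor M F0 (restr M F1) /\
     IsCompatiblePair hV F0 (restr E F1) (restr M F1)) /\
  (* injectivity *)
  (forall (F0 F0' : Ob A -> Ob C) (F1 F1' : Mor A -> Mor C),
     IsVarFunctor hV F0 F1 -> IsVarFunctor hV F0' F1' ->
     (F0, restr E F1, restr M F1) = (F0', restr E F1', restr M F1') ->
     F0 = F0' /\ F1 = F1') /\
  (* surjectivity onto compatible pairs *)
  (forall (O : Ob A -> Ob C) (G1 : {f : Mor A | E f} -> Mor C)
          (H1 : {f : Mor A | M f} -> Mor C),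
     IsCompatiblePair hV O G1 H1 ->
     exists (F0 : Ob A -> Ob C) (F1 : Mor A -> Mor C),
       IsVarFunctor hV F0 F1 /\ (F0, restr E F1, restr M F1) = (O, G1, H1)).
Proof.
  split; [|split].
  - intros F0 F1 HF.
    exact (conj (var_restr_cov HF) (conj (var_restr_contra HF) (var_restr_compatible HF))).
  - intros F0 F0' F1 F1' HF HF' Heq. injection Heq as HF0 HE HM.
    split; [exact HF0|].
    apply (var_functor_ext HF HF'); intros a ha.
    + exact (f_equal (fun k => k (exist _ a ha)) HE).
    + exact (f_equal (fun k => k (exist _ a ha)) HM).
  - intros O G1 H1 HP. exists O, (var_of_pair hV G1 H1). split.
    + exact (var_of_pair_is_var hV G1 H1 HP).
    + now rewrite (restr_var_of_pair_E hV G1 H1 HP), (restr_var_of_pair_M hV G1 H1 HP).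
Qed.
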